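(* Let $n\ge 1$, let $a=(a_m)_{m\ge 0}$, $b=(b_m)_{m\ge0}$ be complex sequences with $b_0=0$ and $b_m\ne0$ for $m\ge1$, let $(p_m)_{m\ge0}$ be the monic polynomials with $p_{-1}=0$, $p_0=1$, $p_{m+1}(x)=(x-a_m)p_m(x)-b_mp_{m-1}(x)$ ($m\ge0$), and let $W:OY(\mathfrak{gl}_n,a,b)\to Y(\mathfrak{gl}_n)$ be the algebra isomorphism with $W(\tilde t^{(r)}_{ij})=t^{(r)}_{ij}+\sum_{l=0}^{r-1}p^r_lt^{(l)}_{ij}$, where $p_r(x)=\sum_{l=0}^rp^r_lx^l$. Define numbers $q^r_l$ ($0\le l\le r$, $q^r_r=1$) by $x^r=\sum_{l=0}^rq^r_l\,p_l(x)$ for all $r\ge0$. Then the inverse $W^{-1}:Y(\mathfrak{gl}_n)\to OY(\mathfrak{gl}_n,a,b)$ is given by $$t^{(r)}_{ij}\longmapsto \tilde t^{(r)}_{ij}+\sum_{l=0}^{r-1}q^r_l\,\tilde t^{(l)}_{ij},\qquad r\ge1,$$ and, on generating series, $W^{-1}(t_{ij}(u))=\frac{1}{2\pi i}\oint_{|z|=1}K^{-1}(z,\tfrac1u)\,\tilde T_{ij}(z)\frac{dz}{z}$ for $i,j=1,\dots,n$, with kernel $K^{-1}(z,u)=\sum_{l\ge0}u^l\sum_{m=0}^lq^l_mz^m$.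
   Context: $Y(\mathfrak{gl}_n)$ is the unital associative $\mathbb C$-algebra with generators $t^{(r)}_{ij}$ ($1\le i,j\le n$, $r\ge1$) and relations $[t^{(r+1)}_{ij},t^{(s)}_{kl}]-[t^{(r)}_{ij},t^{(s+1)}_{kl}]=t^{(r)}_{kj}t^{(s)}_{il}-t^{(s)}_{kj}t^{(r)}_{il}$ ($r,s\ge0$), $t^{(0)}_{ij}=\delta_{ij}$; $t_{ij}(u)=\sum_{r\ge0}t^{(r)}_{ij}u^{-r}$. $OY(\mathfrak{gl}_n,a,b)$ is the unital associative algebra with generators $\tilde t^{(r)}_{ij}$ ($r\ge1$) and relations $[\tilde t^{(r+1)}_{ij}+a_r\tilde t^{(r)}_{ij}+b_r\tilde t^{(r-1)}_{ij},\tilde t^{(s)}_{kl}]-[\tilde t^{(r)}_{ij},\tilde t^{(s+1)}_{kl}+a_s\tilde t^{(s)}_{kl}+b_s\tilde t^{(s-1)}_{kl}]=\tilde t^{(r)}_{kj}\tilde t^{(s)}_{il}-\tilde t^{(s)}_{kj}\tilde t^{(r)}_{il}$ ($r,s\ge0$), with $\tilde t^{(0)}_{ij}=\delta_{ij}$, $\tilde t^{(-1)}_{ij}=0$; $\tilde T_{ij}(u)=\delta_{ij}+\sum_{r\ge1}\tilde t^{(r)}_{ij}u^{-r}$. The contour integral $\frac{1}{2\pi i}\oint_{|z|=1}F(z)\frac{dz}{z}$ is understood formally as the coefficient of $z^0$ in $F(z)$, taken coefficientwise in $u^{-1}$. *)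

From HB Require Import structures.
From mathcomp Require Import all_boot all_order all_algebra.
From mathcomp Require Import complex Rstruct.
From Stdlib Require Import Rdefinitions.
Set Implicit Arguments. Unset Strict Implicit. Unset Printing Implicit Defensive.
Import Order.TTheory GRing.Theory Num.Theory.
Local Open Scope ring_scope.

Definition C : fieldType := (complex Rdefinitions.R).

Definition comm {A : pzRingType} (x y : A) : A := x * y - y * x.

Definition alg_hom (A B : algType C) (f : A -> B) : Prop :=
  (forall (c : C) (x y : A), f (c *: x + y) = c *: f x + f y) /\
  (forall x y : A, f (x * y) = f x * f y) /\ f 1 = 1.

Definition yangian_rel (n : nat) (A : algType C)
    (t : nat -> 'I_n -> 'I_n -> A) : Prop :=
  (forall i j, t 0%N i j = (i == j)%:R) /\
  (forall (r s : nat) (i j k l : 'I_n),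
     comm (t r.+1 i j) (t s k l) - comm (t r i j) (t s.+1 k l)
     = t r k j * t s i l - t s k j * t r i l).

Definition prevt (n : nat) (A : algType C) (t : nat -> 'I_n -> 'I_n -> A)
    (r : nat) (i j : 'I_n) : A :=
  if r is r'.+1 then t r' i j else 0.

Definition oyangian_rel (n : nat) (a b : nat -> C) (A : algType C)
    (t : nat -> 'I_n -> 'I_n -> A) : Prop :=
  (forall i j, t 0%N i j = (i == j)%:R) /\
  (forall (r s : nat) (i j k l : 'I_n),
     comm (t r.+1 i j + a r *: t r i j + b r *: prevt t r i j) (t s k l)
     - comm (t r i j) (t s.+1 k l + a s *: t s k l + b s *: prevt t s k l)
     = t r k j * t s i l - t s k j * t r i l).

Definition presented_by (n : nat)
    (rel : forall B : algType C, (nat -> 'I_n -> 'I_n -> B) -> Prop)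
    (A : algType C) (t : nat -> 'I_n -> 'I_n -> A) : Prop :=
  rel A t /\
  forall (B : algType C) (f : nat -> 'I_n -> 'I_n -> B), rel B f ->
    (exists phi : A -> B, alg_hom phi /\
        forall r i j, phi (t r.+1 i j) = f r.+1 i j) /\
    (forall phi psi : A -> B, alg_hom phi -> alg_hom psi ->
        (forall r i j, phi (t r.+1 i j) = f r.+1 i j) ->
        (forall r i j, psi (t r.+1 i j) = f r.+1 i j) ->
        forall x, phi x = psi x).

(* The monic polynomials p_m: p_{-1} = 0, p_0 = 1,
   p_{m+1} = (x - a_m) p_m - b_m p_{m-1}.  opoly_pair m = (p_m, p_{m-1}). *)
Fixpoint opoly_pair (a b : nat -> C) (m : nat) : {poly C} * {poly C} :=
  match m with
  | 0%N => (1, 0)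
  | m'.+1 => let pr := opoly_pair a b m' in
             (('X - (a m')%:P) * pr.1 - b m' *: pr.2, pr.1)
  end.

Definition opoly (a b : nat -> C) (m : nat) : {poly C} := (opoly_pair a b m).1.

(* Formal contour integral (1/2 pi i) \oint P(z) T(z) dz/z = coefficient of z^0
   of P(z) * T(z), where P(z) = sum_m P_m z^m is a polynomial in z and
   T(z) = sum_s T_s z^{-s} is a formal series in z^{-1}. *)
Definition ct0 (A : algType C) (P : {poly C}) (T : nat -> A) : A :=
  \sum_(m < size P) P`_m *: T m.

(* Coefficient of u^l in K^{-1}(z,u) = sum_l u^l sum_{m<=l} q^l_m z^m, i.e.
   coefficient of u^{-l} in K^{-1}(z, 1/u): a polynomial in z. *)
Definition Kinv_coef (q : nat -> nat -> C) (l : nat) : {poly C} :=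
  \poly_(m < l.+1) q l m.

From HB Require Import structures.
From mathcomp Require Import all_boot all_order all_algebra.
Import GRing.Theory.
Set Implicit Arguments.
Local Open Scope ring_scope.

(* Read [ct0 P v] as the linear substitution [x^k |-> v k] applied to the
   polynomial [P].  Then [W (tt r)] is the substitution of [t] into [p_r], so
   substituting [tt] into [x^r = sum_l q^r_l p_l] and applying the linear map
   [W] gives back [t r], which identifies [Winv (t r)]. *)

Section AlgHom.

Variables (A B : algType C) (f : A -> B).
Hypothesis hf : alg_hom f.

Lemma alg_homD x y : f (x + y) = f x + f y.
Proof. by have [hlin _] := hf; have := hlin 1 x y; rewrite !scale1r. Qed.

Lemma alg_hom0 : f 0 = 0.
Proof. by apply: (addrI (f 0)); rewrite -alg_homD !addr0. Qed.

Lemma alg_hom1 : f 1 = 1.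
Proof. by case: hf => _ []. Qed.

Lemma alg_homZ c x : f (c *: x) = c *: f x.
Proof. by have [hlin _] := hf; rewrite -[c *: x]addr0 hlin alg_hom0 addr0. Qed.

Lemma alg_hom_nat k : f k%:R = k%:R.
Proof.
by elim: k => [|k IHk]; rewrite ?alg_hom0 // !mulrS alg_homD alg_hom1 IHk.
Qed.

Lemma alg_hom_sumZ (I : Type) (s : seq I) (c : I -> C) (x : I -> A) :
  f (\sum_(i <- s) c i *: x i) = \sum_(i <- s) c i *: f (x i).
Proof.
rewrite (big_morph f alg_homD alg_hom0).
by apply: eq_bigr => i _; rewrite alg_homZ.
Qed.

End AlgHom.

Section Substitution.

Variable A : algType C.

Lemma ct0E {P : {poly C}} {k : nat} (v : nat -> A) :
  (size P <= k)%N -> ct0 P v = \sum_(m < k) P`_m *: v m.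
Proof.
move=> le_Pk; rewrite /ct0 (big_ord_widen k (fun m => P`_m *: v m) le_Pk).
rewrite big_mkcond; apply: eq_bigr => m _.
by case: ltnP => // le_Pm; rewrite nth_default ?scale0r.
Qed.

Lemma ct0_poly k (E : nat -> C) (v : nat -> A) :
  ct0 (\poly_(m < k) E m) v = \sum_(m < k) E m *: v m.
Proof.
rewrite (ct0E _ (size_poly _ _)).
by apply: eq_bigr => m _; rewrite coef_poly ltn_ord.
Qed.

Lemma ct0_Xn r (v : nat -> A) : ct0 'X^r v = v r.
Proof.
rewrite /ct0 size_polyXn big_ord_recr big1 => [|m _].
  by rewrite coefXn eqxx scale1r /= add0r.
by rewrite coefXn ltn_eqF ?scale0r //; exact: ltn_ord m.
Qed.

Lemma ct0_addZ c P Q (v : nat -> A) :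
  ct0 (c *: P + Q) v = c *: ct0 P v + ct0 Q v.
Proof.
pose k := maxn (size P) (size Q).
have le_Pk : (size P <= k)%N by rewrite leq_maxl.
have le_Qk : (size Q <= k)%N by rewrite leq_maxr.
have le_cPQk : (size (c *: P + Q)%R <= k)%N.
  rewrite (leq_trans (size_polyD _ _)) // geq_max le_Qk andbT.
  exact: leq_trans (size_scale_leq _ _) le_Pk.
rewrite !(ct0E _ le_cPQk, ct0E _ le_Pk, ct0E _ le_Qk) scaler_sumr -big_split.
by apply: eq_bigr => m _; rewrite coefD coefZ scalerDl scalerA.
Qed.

Lemma ct0_sumZ (I : Type) (s : seq I) (c : I -> C) (Q : I -> {poly C})
    (v : nat -> A) :
  ct0 (\sum_(i <- s) c i *: Q i) v = \sum_(i <- s) c i *: ct0 (Q i) v.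
Proof.
elim: s => [|i s IHs]; last by rewrite !big_cons ct0_addZ IHs.
by rewrite !big_nil /ct0 size_poly0 big_ord0.
Qed.

End Substitution.

Section OrthogonalPolynomials.

Variables a b : nat -> C.

Lemma opolyS m :
  opoly a b m.+1 = ('X - (a m)%:P) * opoly a b m - b m *: (opoly_pair a b m).2.
Proof. by []. Qed.

Lemma size_lead_coef_opoly m :
  [/\ size (opoly a b m) = m.+1, lead_coef (opoly a b m) = 1
    & (size (opoly_pair a b m).2 <= m)%N].
Proof.
elim: m => [|m [size_p lead_p size_p']].
  by rewrite /opoly size_poly1 lead_coef1 size_poly0.
have p_neq0 : opoly a b m != 0 by rewrite -size_poly_gt0 size_p.
have size_Xp : size (('X - (a m)%:P) * opoly a b m) = m.+2.
  by rewrite size_monicM ?monicXsubC // size_XsubC size_p.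
have size_rest : (size (- (b m *: (opoly_pair a b m).2)) < m.+2)%N.
  by rewrite size_polyN (leq_ltn_trans (size_scale_leq _ _)) // ltnS ltnW.
split; last by rewrite size_p.
- by rewrite opolyS size_polyDl size_Xp.
- by rewrite opolyS lead_coefDl ?size_Xp // lead_coef_monicM ?monicXsubC.
Qed.

Lemma coef_opoly_gt m k : (m < k)%N -> (opoly a b m)`_k = 0.
Proof.
have [size_p _ _] := size_lead_coef_opoly m.
by move=> lt_mk; rewrite nth_default ?size_p.
Qed.

Lemma coef_opoly_diag m : (opoly a b m)`_m = 1.
Proof.
have [size_p lead_p _] := size_lead_coef_opoly m.
by rewrite -lead_p lead_coefE size_p.
Qed.

Lemma ct0_opoly (A : algType C) m (v : nat -> A) :
  ct0 (opoly a b m) v = v m + \sum_(l < m) (opoly a b m)`_l *: v l.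
Proof.
have [size_p _ _] := size_lead_coef_opoly m.
by rewrite /ct0 size_p big_ord_recr coef_opoly_diag scale1r addrC.
Qed.

Lemma opoly_coord_Xn_diag {c : nat -> C} {r : nat} :
  'X^r = \sum_(l < r.+1) c l *: opoly a b l -> c r = 1.
Proof.
move=> expand_Xr.
have : ('X^r)`_r = (\sum_(l < r.+1) c l *: opoly a b l)`_r.
  by rewrite -expand_Xr.
rewrite coefXn eqxx coef_sum big_ord_recr coefZ coef_opoly_diag mulr1.
rewrite big1 => [|l _]; first by rewrite /= add0r => <-.
by rewrite coefZ coef_opoly_gt ?mulr0 //; exact: ltn_ord l.
Qed.

End OrthogonalPolynomials.

Theorem mainTheorem2 (n : nat) (hn : (1 <= n)%N) (a b : nat -> C)
  (hb0 : b 0%N = 0) (hb : forall m, (1 <= m)%N -> b m != 0)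
  (Y : algType C) (t : nat -> 'I_n -> 'I_n -> Y)
  (hY : presented_by (@yangian_rel n) t)
  (OY : algType C) (tt : nat -> 'I_n -> 'I_n -> OY)
  (hOY : presented_by (@oyangian_rel n a b) tt)
  (W : OY -> Y) (hW : alg_hom W)
  (hWt : forall (r : nat) (i j : 'I_n), (1 <= r)%N ->
     W (tt r i j) = t r i j + \sum_(l < r) (opoly a b r)`_l *: t l i j)
  (Winv : Y -> OY) (hWK : cancel W Winv) (hWinvK : cancel Winv W)
  (q : nat -> nat -> C)
  (hq : forall r : nat, 'X^r = \sum_(l < r.+1) q r l *: opoly a b l) :
  (forall (r : nat) (i j : 'I_n), (1 <= r)%N ->
     Winv (t r i j) = tt r i j + \sum_(l < r) q r l *: tt l i j) /\
  (forall (i j : 'I_n) (r : nat),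
     Winv (t r i j) = ct0 (Kinv_coef q r) (fun s => tt s i j)).
Proof.
have [[t0 _] _] := hY; have [[tt0 _] _] := hOY.
have W_tt l i j : W (tt l i j) = ct0 (opoly a b l) (fun k => t k i j).
  rewrite ct0_opoly; case: l => [|l]; last exact: hWt.
  by rewrite big_ord0 addr0 tt0 t0 alg_hom_nat.
have Winv_t r i j : Winv (t r i j) = \sum_(l < r.+1) q r l *: tt l i j.
  apply: (can_inj hWK); rewrite hWinvK (alg_hom_sumZ hW).
  under eq_bigr do rewrite W_tt.
  by rewrite -ct0_sumZ -hq ct0_Xn.
split=> [r i j _ | i j r]; last by rewrite Winv_t /Kinv_coef ct0_poly.
by rewrite Winv_t big_ord_recr (opoly_coord_Xn_diag _ _ (hq r)) scale1r addrC.
Qed.
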